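(* For every even integer $n=2k>0$, the root scheme $$\big([(q,2),(p,2)]^{k},(q,1),(r,1)^{2k+1},(p,1)\big)$$ is realizable by polynomials of degree $n+1$. For every odd integer $n=2k+1>0$, the root scheme $$\big([(q,2),(p,2)]^{k},(q,2),(p,1),(r,1)^{2k+2},(p,1)\big)$$ is realizable by polynomials of degree $n+1$.
   Context: A root scheme is a finite sequence $((l_1,m_1),\dots,(l_k,m_k))$ with $l_i\in\{p,q,r\}$ and $m_i$ a positive integer. It is realizable by polynomials of degree $d$ if there exist real polynomials $P,Q$ such that $f=P-Q$ has degree $d$ and, listing the real roots of $P$, $Q$ and $f$ in increasing order as $\rho_1<\dots<\rho_k$, each $\rho_i$ is a root of exactly one of $P,Q,f$, with $l_i=p$ (resp. $q$, $r$) if $\rho_i$ is a root of $P$ (resp. $Q$, $f$), and $m_i$ is the multiplicity of $\rho_i$ as such a root. A sequence $T$ repeated $u$ times is written $T^u$ (empty if $u=0$), and $[\dots]$ denotes grouping. *)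

(* real polynomials over an arbitrary realType R
   (every realType is a complete archimedean ordered field, i.e. the reals). *)
From mathcomp Require Import all_boot all_order all_algebra.
From mathcomp Require Import reals.
Set Implicit Arguments. Unset Strict Implicit. Unset Printing Implicit Defensive.
Import Order.TTheory GRing.Theory Num.Theory.
Local Open Scope ring_scope.

(* Labels of a root scheme: p (root of P), q (root of Q), r (root of f = P - Q). *)
Inductive lbl := Lp | Lq | Lr.

Definition scheme := seq (lbl * nat).

Definition root_entry (R : realType) (P Q : {poly R}) (x : R) (e : lbl * nat) : Prop :=
  let f := P - Q in
  match e.1 with
  | Lp => [/\ root P x, ~~ root Q x, ~~ root f x & mup x P = e.2]
  | Lq => [/\ ~~ root P x, root Q x, ~~ root f x & mup x Q = e.2]
  | Lr => [/\ ~~ root P x, ~~ root Q x, root f x & mup x f = e.2]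
  end.

Definition realizes (R : realType) (s : scheme) (d : nat) (P Q : {poly R}) : Prop :=
  size (P - Q) = d.+1 /\
  exists rho : seq R,
    [/\ sorted <%R rho,
        size rho = size s,
        (forall x : R, (root P x || root Q x || root (P - Q) x) <-> x \in rho)
      & forall i, (i < size s)%N -> root_entry P Q (nth 0 rho i) (nth (Lp, 0%N) s i)].

Definition realizable (R : realType) (s : scheme) (d : nat) : Prop :=
  exists P Q : {poly R}, realizes s d P Q.

Definition srep (T : scheme) (u : nat) : scheme := flatten (nseq u T).

Definition scheme_even (k : nat) : scheme :=
  srep [:: (Lq, 2%N); (Lp, 2%N)] k ++ [:: (Lq, 1%N)] ++ srep [:: (Lr, 1%N)] (2 * k + 1)
  ++ [:: (Lp, 1%N)].

Definition scheme_odd (k : nat) : scheme :=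
  srep [:: (Lq, 2%N); (Lp, 2%N)] k ++ [:: (Lq, 2%N); (Lp, 1%N)]
  ++ srep [:: (Lr, 1%N)] (2 * k + 2) ++ [:: (Lp, 1%N)].

From mathcomp Require Import all_boot all_order all_algebra.
From mathcomp Require Import reals.
From mathcomp Require Import polyrcf zify ring lra.

(* Let tk = 6 * 16^k, A(x) = prod_(i < k) (x + tk^(2i+1)) and
   B(x) = prod_(i < k) (x + tk^(2i+2)).  For n even take P = (x - bk) A^2 and
   Q = - x B^2, for n odd P = x (x - bk) A^2 and Q = - (x + 1)^2 B^2, where
   bk = 6 * 4^k * tk^(2k).  The double roots of A^2 and B^2 interlace on
   (-oo, -tk] and give the block [(q,2),(p,2)]^k; the other roots of P and Q
   are the prescribed ones.  Splitting the products at index j gives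
   tk^(k-j) A <= 2^(k-j) B on [0, tk^(2j+1)] and B <= 2^j tk^(k-j) A on
   [tk^(2j), oo), so at each tk^m (m <= 2k) one of the two terms of f = P - Q
   dominates, and f alternates in sign at 0, the powers of tk, and bk.  The
   intermediate value theorem then gives deg f simple roots of f in (0, bk). *)

Set Implicit Arguments. Unset Strict Implicit. Unset Printing Implicit Defensive.
Import Order.TTheory GRing.Theory Num.Theory.
Local Open Scope ring_scope.

Section RootEntries.
Variables (R : realType) (P Q : {poly R}).

Definition root_entries (rho : seq R) (s : scheme) :=
  size rho = size s /\
  forall i, (i < size s)%N -> root_entry P Q (nth 0 rho i) (nth (Lp, 0%N) s i).

Lemma root_entries_nil : root_entries [::] [::].
Proof. by []. Qed.

Lemma root_entries_cat r1 r2 s1 s2 :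
  root_entries r1 s1 -> root_entries r2 s2 -> root_entries (r1 ++ r2) (s1 ++ s2).
Proof.
move=> [e1 h1] [e2 h2]; split; first by rewrite !size_cat e1 e2.
move=> i; rewrite size_cat !nth_cat e1 => lt.
by case: ltnP => h; [exact: h1 | apply: h2; lia].
Qed.

Lemma root_entries_cons x e r s :
  root_entry P Q x e -> root_entries r s -> root_entries (x :: r) (e :: s).
Proof. by move=> he; apply: (@root_entries_cat [:: x] r [:: e] s); split=> // -[]. Qed.

Lemma root_entries_map n (g : nat -> R) (h : nat -> lbl * nat) :
  (forall m, (m < n)%N -> root_entry P Q (g m) (h m)) ->
  root_entries (map g (iota 0 n)) (map h (iota 0 n)).
Proof.
move=> H; split=> [|i]; rewrite !size_map // size_iota => lt.
by rewrite !(nth_map 0%N) ?size_iota // nth_iota //; apply: H.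
Qed.

Lemma root_entries_nseq (rs : seq R) e :
  {in rs, forall x, root_entry P Q x e} -> root_entries rs (nseq (size rs) e).
Proof.
move=> H; split=> [|i]; rewrite size_nseq // => lt.
by rewrite nth_nseq lt; apply/H/mem_nth.
Qed.

End RootEntries.

Lemma srep_pair (e1 e2 : lbl * nat) n :
  srep [:: e1; e2] n = [seq if odd m then e2 else e1 | m <- iota 0 (2 * n)].
Proof.
elim: n => [|n IH] //.
rewrite -[srep _ n.+1]/(e1 :: e2 :: srep [:: e1; e2] n) IH mulnS /=.
by rewrite (iotaDl 2 0) -map_comp; congr [:: _, _ & _]; apply: eq_map => m /=; rewrite negbK.
Qed.

Lemma srep_single (e : lbl * nat) n : srep [:: e] n = nseq n e.
Proof. by elim: n => //= n <-. Qed.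

Lemma sorted_cat_ltr (R : numDomainType) (s1 s2 : seq R) :
  sorted <%R s1 -> sorted <%R s2 -> {in s1 & s2, forall x y, x < y} ->
  sorted <%R (s1 ++ s2).
Proof.
rewrite !(sorted_pairwise lt_trans).
by move=> h1 h2 h12; rewrite pairwise_cat h1 h2 !andbT; apply/allrelP.
Qed.

Lemma ler_prod_nat (R : numDomainType) m n (E1 E2 : nat -> R) :
  (forall i, (m <= i < n)%N -> 0 <= E1 i <= E2 i) ->
  \prod_(m <= i < n) E1 i <= \prod_(m <= i < n) E2 i.
Proof.
move=> h; rewrite big_nat_cond [leRHS]big_nat_cond.
by apply: ler_prod => i /andP[/h].
Qed.

Section PolyFacts.
Variable R : realType.
Implicit Types (p q : {poly R}) (x : R).

Lemma mup_opp x p : mup x (- p) = mup x p.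
Proof. by rewrite -mulN1r mupMr // rootN root1. Qed.

Lemma nroot_sub_rootl p q x : root p x -> ~~ root q x -> ~~ root (p - q) x.
Proof. by rewrite /root hornerD hornerN => /eqP ->; rewrite sub0r oppr_eq0. Qed.

Lemma nroot_sub_rootr p q x : ~~ root p x -> root q x -> ~~ root (p - q) x.
Proof. by rewrite /root hornerD hornerN => ? /eqP ->; rewrite subr0. Qed.

Lemma size_add_monic p q n :
  p \is monic -> q \is monic -> size p = n.+1 -> size q = n.+1 -> size (p + q) = n.+1.
Proof.
move=> mp mq sp sq; apply/anti_leq/andP; split.
  by apply: leq_trans (size_polyD _ _) _; rewrite sp sq maxnn.
have : (p + q)`_n = 2.
  by rewrite coefD; move: (monicP mp) (monicP mq); rewrite !lead_coefE sp sq => -> ->.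
by apply: contra_eqT; rewrite -leqNgt => /(nth_default 0) ->; rewrite eq_sym pnatr_eq0.
Qed.

Section FullRoots.
Variables (f : {poly R}) (rs : seq R).
Hypotheses (size_f : size f = (size rs).+1) (rs_roots : all (root f) rs) (uniq_rs : uniq rs).

Let f_factor : f = lead_coef f *: \prod_(r <- rs) ('X - r%:P).
Proof. by apply: all_roots_prod_XsubC; rewrite ?uniq_rootsE. Qed.

Let lead_f_neq0 : lead_coef f != 0.
Proof. by rewrite lead_coef_eq0 -size_poly_eq0 size_f. Qed.

Lemma root_full_roots x : root f x = (x \in rs).
Proof. by rewrite f_factor (rootZ _ _ lead_f_neq0) root_prod_XsubC. Qed.

Lemma mup_full_roots r : r \in rs -> mup r f = 1%N.
Proof.
move=> rr; rewrite f_factor -mul_polyC mupMr ?rootC ?lead_f_neq0 // mu_prod_XsubC.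
by rewrite count_uniq_mem // rr.
Qed.

End FullRoots.

Lemma chain_first_le_last (x : nat -> R) n :
  (forall j, (j < n)%N -> x j < x j.+1) -> x 0 <= x n.
Proof.
elim: n => // n IH H.
by apply: le_trans (IH _) (ltW (H n _)) => // j jn; apply: H; lia.
Qed.

Lemma sign_changes_roots (f : {poly R}) n (x : nat -> R) :
  (forall j, (j < n)%N -> x j < x j.+1 /\ f.[x j] * f.[x j.+1] < 0) ->
  exists2 rs : seq R, size rs = n &
    [/\ sorted <%R rs, all (root f) rs & {in rs, forall r, x 0 < r < x n}].
Proof.
elim: n x => [|n IH] x H; first by exists [::].
have [x01 f01] := H 0%N isT.
have [r] := poly_ivtoo (ltW x01) f01; rewrite in_itv /= => /andP[xr rx] fr.
have [|rs srs [rs_sorted rs_roots rs_in]] := IH (fun j => x j.+1).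
  by move=> j jn; apply: H.
have x1n : x 1 <= x n.+1.
  by apply: (chain_first_le_last (x := fun j => x j.+1)) => j jn; case: (H j.+1 jn).
exists (r :: rs); first by rewrite /= srs.
split; rewrite /= ?fr //.
  rewrite path_sortedE ?rs_sorted ?andbT; last exact: lt_trans.
  by apply/allP => y /rs_in /andP[+ _]; apply: lt_trans.
move=> y; rewrite inE => /predU1P [->|]; first by rewrite xr (lt_le_trans rx).
by move=> /rs_in /andP[xy ->]; rewrite (lt_trans x01).
Qed.

End PolyFacts.


Section Scale.
Variables (R : realType) (k : nat).

Definition uk : R := 4 ^+ k.
Definition tk : R := 6 * uk ^+ 2.
Definition bk : R := 6 * uk * tk ^+ (2 * k).
Definition alpha i : R := tk ^+ (2 * i + 1).
Definition gamma i : R := tk ^+ (2 * i + 2).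
Definition Aprod (x : R) : R := \prod_(0 <= i < k) (x + alpha i).
Definition Bprod (x : R) : R := \prod_(0 <= i < k) (x + gamma i).

Lemma uk_ge1 : 1 <= uk.
Proof. by rewrite exprn_ege1 // ler1n. Qed.

Lemma tk_gt1 : 1 < tk.
Proof.
have : 1 <= uk ^+ 2 by rewrite exprn_ege1 ?uk_ge1.
by rewrite /tk; lra.
Qed.

Lemma tk_gt0 : 0 < tk.
Proof. exact: lt_trans tk_gt1. Qed.

Lemma tkX_ge1 n : 1 <= tk ^+ n.
Proof. by rewrite exprn_ege1 // ltW // tk_gt1. Qed.

Lemma tkX_gt0 n : 0 < tk ^+ n.
Proof. by rewrite exprn_gt0 // tk_gt0. Qed.

Lemma ler_tkX m n : (m <= n)%N -> tk ^+ m <= tk ^+ n.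
Proof. by move=> mn; rewrite ler_eXn2l // tk_gt1. Qed.

Lemma ltr_tkX m n : (m < n)%N -> tk ^+ m < tk ^+ n.
Proof. by move=> mn; rewrite ltr_eXn2l // tk_gt1. Qed.

Lemma tkX_inj : injective (GRing.exp tk).
Proof.
move=> m n /= e; case: (ltngtP m n) => // /ltr_tkX; by rewrite e ltxx.
Qed.

Lemma gammaE i : gamma i = tk * alpha i.
Proof. by rewrite /gamma /alpha -exprS; congr (_ ^+ _); lia. Qed.

Lemma tk_le_alpha i : tk <= alpha i.
Proof. by rewrite -{1}(expr1 tk) ler_tkX //; lia. Qed.

Lemma alpha_le_gamma i : alpha i <= gamma i.
Proof. by rewrite ler_tkX //; lia. Qed.

Lemma alpha_gt0 i : 0 < alpha i.
Proof. exact: tkX_gt0. Qed.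

Lemma gamma_gt0 i : 0 < gamma i.
Proof. exact: tkX_gt0. Qed.

Lemma Aprod_gt0 x : 0 <= x -> 0 < Aprod x.
Proof. by move=> x0; apply: prodr_gt0 => i _; have := alpha_gt0 i; lra. Qed.

Lemma Bprod_gt0 x : 0 <= x -> 0 < Bprod x.
Proof. by move=> x0; apply: prodr_gt0 => i _; have := gamma_gt0 i; lra. Qed.

Lemma Aprod_le_Bprod j x : (j <= k)%N -> 0 <= x -> x <= tk ^+ (2 * j + 1) ->
  tk ^+ (k - j) * Aprod x <= 2 ^+ (k - j) * Bprod x.
Proof.
move=> jk x0 xle; rewrite /Aprod /Bprod !(@big_cat_nat _ _ _ j 0 k _ _ (leq0n j) jk) /=.
rewrite mulrCA [leRHS]mulrCA -!prodr_const_nat -!big_split /=.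
apply: ler_pM.
- by apply: prodr_ge0 => i _; have := alpha_gt0 i; lra.
- by apply: prodr_ge0 => i _; have := alpha_gt0 i; have := tk_gt0; nra.
- by apply: ler_prod_nat => i _; have := alpha_gt0 i; have := alpha_le_gamma i; lra.
apply: ler_prod_nat => i /andP[ji _].
have xa : x <= alpha i by apply: le_trans xle (ler_tkX _); lia.
by have := alpha_gt0 i; have := tk_gt0; rewrite gammaE; nra.
Qed.

Lemma Bprod_le_Aprod j x : (j <= k)%N -> tk ^+ (2 * j) <= x ->
  Bprod x <= 2 ^+ j * tk ^+ (k - j) * Aprod x.
Proof.
move=> jk xge; have x0 := lt_le_trans (tkX_gt0 _) xge.
rewrite /Aprod /Bprod !(@big_cat_nat _ _ _ j 0 k _ _ (leq0n j) jk) /= mulrACA.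
have -> : (2 : R) ^+ j = \prod_(0 <= i < j) 2 by rewrite prodr_const_nat subn0.
rewrite -prodr_const_nat -!big_split /=.
apply: ler_pM.
- by apply: prodr_ge0 => i _; have := gamma_gt0 i; lra.
- by apply: prodr_ge0 => i _; have := gamma_gt0 i; lra.
- apply: ler_prod_nat => i /andP[_ ij].
  have xc : gamma i <= x by apply: le_trans xge; apply: ler_tkX; lia.
  by rewrite /=; have := alpha_gt0 i; have := gamma_gt0 i; lra.
apply: ler_prod_nat => i _.
by have := alpha_gt0 i; have := tk_gt1; rewrite gammaE; nra.
Qed.

Lemma exp2_sqr_le_uk j : (j <= k)%N -> (2 : R) ^+ j ^+ 2 <= uk.
Proof.
move=> jk; rewrite -exprM mulnC exprM (_ : (2 : R) ^+ 2 = 4); last by rewrite expr2; lra.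
by rewrite ler_weXn2l // ler1n.
Qed.

Lemma bk_Aprod_le j (x := tk ^+ (2 * j + 1)) : (j < k)%N ->
  bk * Aprod x ^+ 2 <= x * Bprod x ^+ 2.
Proof.
move=> jk; have x0 : 0 < x := tkX_gt0 _; have t0 : 0 <= tk by rewrite ltW // tk_gt0.
have A0 := Aprod_gt0 (ltW x0); have B0 := Bprod_gt0 (ltW x0).
have xT : x * tk ^+ (k - j) ^+ 2 = uk * bk.
  rewrite -exprM -exprD (_ : (2 * j + 1 + (k - j) * 2 = (2 * k).+1)%N); last by lia.
  by rewrite exprS /bk /tk; ring.
rewrite -(ler_pM2l (lt_le_trans ltr01 uk_ge1)) mulrA -xT -mulrA -exprMn.
apply: le_trans (_ : x * (2 ^+ (k - j) * Bprod x) ^+ 2 <= _).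
  rewrite ler_pM2l // ler_sqr ?nnegrE ?mulr_ge0 ?exprn_ge0 ?(ltW A0) ?(ltW B0) //.
  exact: Aprod_le_Bprod (ltnW jk) (ltW x0) (lexx _).
have xB0 : 0 <= x * Bprod x ^+ 2 by rewrite mulr_ge0 ?exprn_ge0 ?(ltW x0) ?(ltW B0).
by rewrite exprMn mulrCA ler_wpM2r // exp2_sqr_le_uk // leq_subr.
Qed.

Lemma Bprod_le_bk j (x := tk ^+ (2 * j)) : (j <= k)%N ->
  x * Bprod x ^+ 2 <= uk * tk ^+ (2 * k) * Aprod x ^+ 2.
Proof.
move=> jk; have x0 : 0 < x := tkX_gt0 _.
have A0 := Aprod_gt0 (ltW x0); have B0 := Bprod_gt0 (ltW x0).
have xT : x * tk ^+ (k - j) ^+ 2 = tk ^+ (2 * k).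
  by rewrite -exprM -exprD; congr (_ ^+ _); lia.
apply: le_trans (_ : x * (2 ^+ j * tk ^+ (k - j) * Aprod x) ^+ 2 <= _).
  have T0 : 0 <= 2 ^+ j * tk ^+ (k - j) * Aprod x.
    by rewrite !mulr_ge0 ?exprn_ge0 ?(ltW A0) // ltW // tk_gt0.
  by rewrite ler_pM2l // ler_sqr ?nnegrE ?(ltW B0) // Bprod_le_Aprod.
have -> : x * (2 ^+ j * tk ^+ (k - j) * Aprod x) ^+ 2
    = (2 ^+ j) ^+ 2 * (x * tk ^+ (k - j) ^+ 2) * Aprod x ^+ 2 by ring.
rewrite xT ler_wpM2r ?exprn_ge0 ?(ltW A0) // ler_wpM2r ?exp2_sqr_le_uk //.
exact: ltW (tkX_gt0 _).
Qed.

Lemma tkX_lt_bk : tk ^+ (2 * k) < bk.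
Proof. by have := uk_ge1; have := tkX_gt0 (2 * k); rewrite /bk; nra. Qed.

Lemma bk_gt0 : 0 < bk.
Proof. exact: lt_trans (tkX_gt0 _) tkX_lt_bk. Qed.

(* [P - Q] for the realizations of [scheme_even k] and [scheme_odd k]. *)
Definition feven (x : R) : R := (x - bk) * Aprod x ^+ 2 + x * Bprod x ^+ 2.
Definition fodd (x : R) : R := x * (x - bk) * Aprod x ^+ 2 + (x + 1) ^+ 2 * Bprod x ^+ 2.

Lemma tkX_le_uk_tkX m : (m <= 2 * k)%N -> tk ^+ m <= uk * tk ^+ (2 * k).
Proof.
move=> mk; apply: le_trans (ler_tkX mk) _.
by rewrite ler_peMl ?uk_ge1 // ltW // tkX_gt0.
Qed.

Lemma feven_tkX m : (m <= 2 * k)%N -> 0 < (-1) ^+ m.+1 * feven (tk ^+ m).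
Proof.
move=> mk; rewrite -signr_odd /= /feven; have := odd_double_half m.
set x := tk ^+ m; have x0 : 0 < x := tkX_gt0 m.
have A0 := Aprod_gt0 (ltW x0); have B0 := Bprod_gt0 (ltW x0).
have A20 : 0 < Aprod x ^+ 2 := exprn_gt0 _ A0.
case: (odd m) => /= e; rewrite ?expr0 ?expr1 ?mul1r ?mulN1r.
  have ik : (m./2 < k)%N by lia.
  have := bk_Aprod_le ik; rewrite (_ : (2 * m./2 + 1 = m)%N); last by lia.
  by rewrite -/x; nra.
have ik : (m./2 <= k)%N by lia.
have := Bprod_le_bk ik; rewrite (_ : (2 * m./2 = m)%N); last by lia.
have := tkX_le_uk_tkX mk; rewrite -/x /bk; nra.
Qed.

Lemma fodd_tkX m : (m <= 2 * k)%N -> 0 < (-1) ^+ m.+1 * fodd (tk ^+ m).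
Proof.
move=> mk; rewrite -signr_odd /= /fodd; have := odd_double_half m.
set x := tk ^+ m; have x1 : 1 <= x := tkX_ge1 m.
set W := uk * tk ^+ (2 * k); have bkE : bk = 6 * W by rewrite /bk mulrA.
have A0 := Aprod_gt0 (ltW (lt_le_trans ltr01 x1)).
have B0 := Bprod_gt0 (ltW (lt_le_trans ltr01 x1)).
have A20 : 0 < Aprod x ^+ 2 := exprn_gt0 _ A0.
have B20 : 0 < Bprod x ^+ 2 := exprn_gt0 _ B0.
case: (odd m) => /= e; rewrite ?expr0 ?expr1 ?mul1r ?mulN1r.
  have ik : (m./2 < k)%N by lia.
  have := bk_Aprod_le ik; rewrite (_ : (2 * m./2 + 1 = m)%N); last by lia.
  by rewrite -/x; nra.
have ik : (m./2 <= k)%N by lia.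
have := Bprod_le_bk ik; rewrite (_ : (2 * m./2 = m)%N); last by lia.
have := tkX_le_uk_tkX mk; rewrite -/x -/W bkE.
move=> xW; set A2 := Aprod x ^+ 2 in A20 *; set B2 := Bprod x ^+ 2 in B20 * => xBA.
have : (x + 1) ^+ 2 * B2 <= 4 * x * (x * B2).
  by rewrite mulrA; apply: ler_wpM2r; nra.
have : x * (x * B2) <= x * (W * A2) by apply: ler_wpM2l => //; lra.
have : x * (x * A2) <= x * (W * A2) by apply: ler_wpM2l; nra.
have : 0 < x * (W * A2) by apply: mulr_gt0; nra.
nra.
Qed.

End Scale.

Section Samples.
Variables (R : realType) (k o n : nat).
Hypotheses (o_le1 : (o <= 1)%N) (n_o : (n + o = 2 * k + 2)%N).
Local Notation tk := (tk R k).
Local Notation bk := (bk R k).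

(* The points [0 < tk ^+ o < ... < tk ^+ (2 * k) < bk], indexed from [0] to [n]. *)
Definition sample (j : nat) : R :=
  if j == 0%N then 0 else if (j < n)%N then tk ^+ (j + o).-1 else bk.

Lemma sample_lt j : (j < n)%N -> sample j < sample j.+1.
Proof.
move=> jn; rewrite /sample /= jn; case: (ltnP j.+1 n) => jn1.
  case: eqP => [_|j0]; first exact: tkX_gt0.
  by rewrite ltr_tkX //; lia.
apply: le_lt_trans (tkX_lt_bk R k); case: eqP => _; first exact/ltW/tkX_gt0.
by rewrite ler_tkX //; lia.
Qed.

Lemma sample_sign_changes (f : {poly R}) :
  0 < (-1) ^+ o * f.[0] -> (forall m, (m <= 2 * k)%N -> 0 < (-1) ^+ m.+1 * f.[tk ^+ m]) ->
  0 < f.[bk] ->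
  forall j, (j < n)%N -> sample j < sample j.+1 /\ f.[sample j] * f.[sample j.+1] < 0.
Proof.
move=> f0 f_tkX f_bk.
have sign j : (j <= n)%N -> 0 < (-1) ^+ (j + o) * f.[sample j].
  rewrite /sample; case: eqP => [-> //|j0]; case: ltnP => jn jn'.
    by have := f_tkX (j + o).-1; rewrite prednK; [apply; lia | lia].
  have -> : j = n by lia.
  by rewrite n_o -signr_odd oddD oddM /= mul1r.
move=> j jn; split; first exact: sample_lt.
have := sign j (ltnW jn); have := sign j.+1 jn.
rewrite addSn exprS; set s := (-1) ^+ (j + o).
have s2 : s * s = 1 by rewrite -expr2 -exprM mulnC exprM sqrrN expr1n expr1n.
nra.
Qed.

End Samples.

Section Construction.
Variables (R : realType) (k : nat) (preP preQ : seq R).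
Hypothesis pre_gt : {in preP ++ preQ, forall y, - tk R k < y}.

Local Notation tk := (tk R k).
Local Notation alpha := (alpha R k).
Local Notation gamma := (gamma R k).

Definition negA := [seq - alpha i | i <- iota 0 k].
Definition negB := [seq - gamma i | i <- iota 0 k].
Definition Ppoly := \prod_(y <- preP ++ negA ++ negA) ('X - y%:P).
Definition Qpoly := - \prod_(y <- preQ ++ negB ++ negB) ('X - y%:P).
Definition neg_roots := [seq - tk ^+ (2 * k - m) | m <- iota 0 (2 * k)].

Lemma negA_le x : x \in negA -> x <= - tk.
Proof. by case/mapP => i _ ->; rewrite lerN2 tk_le_alpha. Qed.

Lemma negB_le x : x \in negB -> x <= - tk.
Proof. by case/mapP => i _ ->; rewrite lerN2 (le_trans (tk_le_alpha R k i)) ?alpha_le_gamma. Qed.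

Lemma pre_notin x : x <= - tk -> (x \notin preP) && (x \notin preQ).
Proof.
move=> xle; rewrite -negb_or -mem_cat; apply: contraL xle => /pre_gt.
by rewrite -ltNge.
Qed.

Lemma uniq_negA : uniq negA.
Proof. by rewrite map_inj_uniq ?iota_uniq // => i j /oppr_inj /tkX_inj; lia. Qed.

Lemma uniq_negB : uniq negB.
Proof. by rewrite map_inj_uniq ?iota_uniq // => i j /oppr_inj /tkX_inj; lia. Qed.

Lemma negA_notin_negB x : x \in negA -> x \notin negB.
Proof.
by case/mapP => i _ ->; apply/mapP => -[j _ /oppr_inj /tkX_inj]; lia.
Qed.

Lemma root_Ppoly x : root Ppoly x = (x \in preP) || (x \in negA).
Proof. by rewrite root_prod_XsubC !mem_cat orbb. Qed.

Lemma root_Qpoly x : root Qpoly x = (x \in preQ) || (x \in negB).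
Proof. by rewrite rootN root_prod_XsubC !mem_cat orbb. Qed.

Lemma mup_Ppoly x : mup x Ppoly = (count_mem x preP + 2 * count_mem x negA)%N.
Proof. by rewrite mu_prod_XsubC !count_cat; lia. Qed.

Lemma mup_Qpoly x : mup x Qpoly = (count_mem x preQ + 2 * count_mem x negB)%N.
Proof. by rewrite mup_opp mu_prod_XsubC !count_cat; lia. Qed.

Lemma horner_Ppoly x : Ppoly.[x] = \prod_(y <- preP) (x - y) * Aprod k x ^+ 2.
Proof.
rewrite horner_prod !big_cat /= expr2 /Aprod big_map /index_iota subn0.
by congr (_ * (_ * _)); apply: eq_bigr => i _; rewrite hornerXsubC ?opprK.
Qed.

Lemma horner_Qpoly x : Qpoly.[x] = - (\prod_(y <- preQ) (x - y) * Bprod k x ^+ 2).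
Proof.
rewrite hornerN horner_prod !big_cat /= expr2 /Bprod big_map /index_iota subn0.
by congr (- (_ * (_ * _))); apply: eq_bigr => i _; rewrite hornerXsubC ?opprK.
Qed.

Lemma root_entry_negA x : x \in negA -> root_entry Ppoly Qpoly x (Lp, 2%N).
Proof.
move=> xA; have /pre_notin /andP[xnP xnQ] := negA_le xA.
have rP : root Ppoly x by rewrite root_Ppoly xA orbT.
have nrQ : ~~ root Qpoly x by rewrite root_Qpoly negb_or xnQ negA_notin_negB.
split=> //; first exact: nroot_sub_rootl.
by rewrite mup_Ppoly (count_uniq_mem _ uniq_negA) xA (count_memPn xnP).
Qed.

Lemma root_entry_negB x : x \in negB -> root_entry Ppoly Qpoly x (Lq, 2%N).
Proof.
move=> xB; have /pre_notin /andP[xnP xnQ] := negB_le xB.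
have rQ : root Qpoly x by rewrite root_Qpoly xB orbT.
have nrP : ~~ root Ppoly x.
  by rewrite root_Ppoly negb_or xnP; apply: contraTN xB; apply: negA_notin_negB.
split=> //; first exact: nroot_sub_rootr.
by rewrite mup_Qpoly (count_uniq_mem _ uniq_negB) xB (count_memPn xnQ).
Qed.

Lemma root_entry_preP y : y \in preP -> y \notin preQ ->
  root_entry Ppoly Qpoly y (Lp, count_mem y preP).
Proof.
move=> yP ynQ; have yt : - tk < y by apply: pre_gt; rewrite mem_cat yP.
have ynA : y \notin negA by apply: contraTN yt => /negA_le; rewrite leNgt.
have ynB : y \notin negB by apply: contraTN yt => /negB_le; rewrite leNgt.
have rP : root Ppoly y by rewrite root_Ppoly yP.
have nrQ : ~~ root Qpoly y by rewrite root_Qpoly negb_or ynQ ynB.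
split=> //; first exact: nroot_sub_rootl.
by rewrite mup_Ppoly (count_memPn ynA) muln0 addn0.
Qed.

Lemma root_entry_preQ y : y \in preQ -> y \notin preP ->
  root_entry Ppoly Qpoly y (Lq, count_mem y preQ).
Proof.
move=> yQ ynP; have yt : - tk < y by apply: pre_gt; rewrite mem_cat yQ orbT.
have ynA : y \notin negA by apply: contraTN yt => /negA_le; rewrite leNgt.
have ynB : y \notin negB by apply: contraTN yt => /negB_le; rewrite leNgt.
have rQ : root Qpoly y by rewrite root_Qpoly yQ.
have nrP : ~~ root Ppoly y by rewrite root_Ppoly negb_or ynP ynA.
split=> //; first exact: nroot_sub_rootr.
by rewrite mup_Qpoly (count_memPn ynB) muln0 addn0.
Qed.

(* [neg_roots] lists the [- alpha i] and [- gamma i] in increasing order: they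
   alternate, starting with [- gamma (k - 1)]. *)
Lemma neg_roots_nth m : (m < 2 * k)%N ->
  - tk ^+ (2 * k - m) \in (if odd m then negA else negB).
Proof.
move=> mk; have := odd_double_half (2 * k - m).
rewrite oddB ?oddM //=; [|lia]; case: ifP => om /= e; apply/mapP.
  by exists (2 * k - m)./2; rewrite ?mem_iota /alpha; [lia | congr (- _ ^+ _); lia].
by exists (2 * k - m)./2.-1; rewrite ?mem_iota /gamma; [lia | congr (- _ ^+ _); lia].
Qed.

Lemma mem_neg_roots x : (x \in neg_roots) = (x \in negA) || (x \in negB).
Proof.
apply/idP/idP.
  case/mapP => m; rewrite mem_iota /= => mk ->.
  by have := neg_roots_nth mk; case: ifP => _ ->; rewrite ?orbT.
case/orP => /mapP [i]; rewrite mem_iota /= => ik ->; apply/mapP.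
  by exists (2 * k - (2 * i + 1))%N; rewrite ?mem_iota /alpha; [lia | congr (- _ ^+ _); lia].
by exists (2 * k - (2 * i + 2))%N; rewrite ?mem_iota /gamma; [lia | congr (- _ ^+ _); lia].
Qed.

Lemma root_entries_neg_roots :
  root_entries Ppoly Qpoly neg_roots (srep [:: (Lq, 2%N); (Lp, 2%N)] k).
Proof.
rewrite srep_pair; apply: root_entries_map => m mk.
by have := neg_roots_nth mk; case: ifP => _; [apply: root_entry_negA | apply: root_entry_negB].
Qed.

Lemma sorted_neg_roots : sorted <%R neg_roots.
Proof.
apply/(sortedP 0) => i; rewrite size_map size_iota => hi.
by rewrite !(nth_map 0%N) ?size_iota ?nth_iota ?ltrN2 ?ltr_tkX //; lia.
Qed.

Lemma size_Ppoly_sub_Qpoly :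
  size preP = size preQ -> size (Ppoly - Qpoly) = (size preP + 2 * k).+1.
Proof.
move=> ePQ; rewrite opprK; apply: size_add_monic; rewrite ?monic_prod_XsubC //.
  by rewrite size_prod_XsubC !size_cat !size_map size_iota; lia.
by rewrite size_prod_XsubC !size_cat !size_map size_iota; lia.
Qed.

Lemma realizes_of_roots (b0 : R) (mid : seq R) (smid : scheme) (rs : seq R) :
  0 < b0 -> (forall x, (x \in preP) || (x \in preQ) = (x \in mid) || (x == b0)) ->
  {in mid, forall x, - tk < x <= 0} -> sorted <%R mid ->
  root_entries Ppoly Qpoly mid smid -> root_entry Ppoly Qpoly b0 (Lp, 1%N) ->
  size (Ppoly - Qpoly) = (size rs).+1 -> all (root (Ppoly - Qpoly)) rs ->
  sorted <%R rs -> {in rs, forall r, 0 < r < b0} ->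
  realizes (srep [:: (Lq, 2%N); (Lp, 2%N)] k ++ smid ++ srep [:: (Lr, 1%N)] (size rs)
             ++ [:: (Lp, 1%N)]) (size rs) Ppoly Qpoly.
Proof.
move=> b0_gt0 pre_mid mid_in mid_sorted mid_entries b0_entry size_f rs_roots rs_sorted rs_in.
have uniq_rs : uniq rs by apply: sorted_uniq rs_sorted; [exact: lt_trans | exact: ltxx].
have tk0 := tk_gt0 R k.
have rs_entries : root_entries Ppoly Qpoly rs (srep [:: (Lr, 1%N)] (size rs)).
  rewrite srep_single; apply: root_entries_nseq => r rr.
  have /andP[r0 rb0] := rs_in r rr.
  have : ~~ ((r \in preP) || (r \in preQ)).
    rewrite pre_mid negb_or (lt_eqF rb0) andbT.
    by apply: contraTN r0 => /mid_in /andP[_]; rewrite leNgt.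
  rewrite negb_or => /andP[rnP rnQ].
  have rnA : r \notin negA by apply: contraTN r0 => /negA_le; lra.
  have rnB : r \notin negB by apply: contraTN r0 => /negB_le; lra.
  split; rewrite ?root_Ppoly ?root_Qpoly ?negb_or ?rnP ?rnQ ?rnA ?rnB //.
    by rewrite (root_full_roots size_f rs_roots uniq_rs).
  exact: (mup_full_roots size_f rs_roots uniq_rs).
split=> //; exists (neg_roots ++ mid ++ rs ++ [:: b0]).
have [size_rho rho_entries] := root_entries_cat root_entries_neg_roots
  (root_entries_cat mid_entries (root_entries_cat rs_entries
     (root_entries_cons b0_entry (root_entries_nil Ppoly Qpoly)))).
split=> //.
- apply: sorted_cat_ltr => [||x y xN].
  + exact: sorted_neg_roots.
  + apply: sorted_cat_ltr => // [|x y /mid_in /andP[_ x0]].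
      apply: sorted_cat_ltr => //= x y /rs_in /andP[_ xb].
      by rewrite inE => /eqP ->.
    by rewrite mem_cat inE => /orP[/rs_in /andP[y0 _] | /eqP ->]; lra.
  have x_le : x <= - tk by move: xN; rewrite mem_neg_roots => /orP[/negA_le | /negB_le].
  rewrite !mem_cat inE => /or3P[/mid_in /andP[yt _] | /rs_in /andP[y0 _] | /eqP ->]; lra.
- move=> x; rewrite root_Ppoly root_Qpoly (root_full_roots size_f rs_roots uniq_rs).
  rewrite !mem_cat mem_neg_roots inE; move: (pre_mid x).
  by case: (x \in preP); case: (x \in preQ); case: (x \in negA); case: (x \in negB);
     case: (x \in mid); case: (x == b0); case: (x \in rs).
Qed.

End Construction.

Section Cases.
Variables (R : realType) (k : nat).
Local Notation tk := (tk R k).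
Local Notation bk := (bk R k).

Lemma realizable_scheme_even : realizable R (scheme_even k) (2 * k + 1).
Proof.
have tk0 := tk_gt0 R k; have bk0 := bk_gt0 R k.
have pre_gt : {in [:: bk] ++ [:: 0 : R], forall y, - tk < y}.
  by move=> y; rewrite mem_cat !inE => /orP[] /eqP ->; lra.
pose P := Ppoly k [:: bk]; pose Q := Qpoly k [:: 0 : R].
have fE x : (P - Q).[x] = feven k x.
  by rewrite hornerD hornerN !horner_Ppoly !horner_Qpoly !big_cons !big_nil /feven; ring.
have [|rs size_rs [rs_sorted rs_roots rs_in]] :=
    @sign_changes_roots R (P - Q) (2 * k + 1) (sample R k 1 (2 * k + 1)).
  apply: sample_sign_changes; rewrite ?fE /feven //; first by lia.
  - by rewrite expr1 mulN1r sub0r mul0r addr0 mulNr opprK mulr_gt0 // exprn_gt0 // Aprod_gt0.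
  - by move=> m mk; rewrite fE feven_tkX.
  - by rewrite subrr mul0r add0r mulr_gt0 // exprn_gt0 // Bprod_gt0 // ltW.
exists P, Q; rewrite /scheme_even -size_rs.
apply: (realizes_of_roots pre_gt (b0 := bk) (mid := [:: 0])) => //.
- by move=> x; rewrite !inE orbC.
- by move=> x; rewrite inE => /eqP ->; lra.
- apply: root_entries_cons (root_entries_nil _ _).
  by have := root_entry_preQ pre_gt (y := 0); rewrite /= eqxx /=; apply; rewrite !inE ?eqxx ?(lt_eqF bk0).
- by have := root_entry_preP pre_gt (y := bk); rewrite /= eqxx /=; apply; rewrite !inE ?eqxx ?(gt_eqF bk0).
- by rewrite size_Ppoly_sub_Qpoly // size_rs /= add1n addn1.
- by move=> r /rs_in; rewrite /sample /= ltnn; have -> : (2 * k + 1 == 0)%N = false by lia.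
Qed.

Lemma realizable_scheme_odd : realizable R (scheme_odd k) (2 * k + 2).
Proof.
have t1 := tk_gt1 R k; have bk0 := bk_gt0 R k.
have pre_gt : {in [:: 0; bk] ++ [:: -1; -1], forall y, - tk < y}.
  by move=> y; rewrite !inE => /or4P [] /eqP ->; lra.
pose P := Ppoly k [:: 0; bk]; pose Q := Qpoly k [:: -1; -1 : R].
have fE x : (P - Q).[x] = fodd k x.
  by rewrite hornerD hornerN !horner_Ppoly !horner_Qpoly !big_cons !big_nil /fodd; ring.
have [|rs size_rs [rs_sorted rs_roots rs_in]] :=
    @sign_changes_roots R (P - Q) (2 * k + 2) (sample R k 0 (2 * k + 2)).
  apply: sample_sign_changes; rewrite ?fE /fodd //; first by lia.
  - by rewrite expr0 mul1r !mul0r !add0r expr1n mul1r exprn_gt0 // Bprod_gt0.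
  - by move=> m mk; rewrite fE fodd_tkX.
  - rewrite subrr mulr0 mul0r add0r mulr_gt0 // exprn_gt0 ?Bprod_gt0 //; lra.
exists P, Q; rewrite /scheme_odd -size_rs.
apply: (realizes_of_roots pre_gt (b0 := bk) (mid := [:: -1; 0])) => //.
- by move=> x; rewrite !inE; case: (x == 0); case: (x == bk); case: (x == -1).
- by move=> x; rewrite !inE => /orP[] /eqP ->; lra.
- by rewrite /= andbT; lra.
- apply: root_entries_cons; last apply: root_entries_cons (root_entries_nil _ _).
    have := root_entry_preQ pre_gt (y := -1); rewrite /= eqxx /=; apply; rewrite !inE ?eqxx //.
    by rewrite negb_or; apply/andP; split; apply/eqP; lra.
  have := root_entry_preP pre_gt (y := 0); rewrite /= eqxx (gt_eqF bk0) /=; apply.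
    by rewrite !inE eqxx.
  by rewrite !inE; apply/negP => /orP[] /eqP; lra.
- have := root_entry_preP pre_gt (y := bk); rewrite /= eqxx (lt_eqF bk0) /=; apply.
    by rewrite !inE eqxx orbT.
  by rewrite !inE; apply/negP => /orP[] /eqP; lra.
- by rewrite size_Ppoly_sub_Qpoly // size_rs /= addn2.
- by move=> r /rs_in; rewrite /sample /= ltnn; have -> : (2 * k + 2 == 0)%N = false by lia.
Qed.

End Cases.

Theorem proposition3p2 (R : realType) :
  (forall k : nat, (0 < k)%N -> realizable R (scheme_even k) (2 * k + 1)) /\
  (forall k : nat, realizable R (scheme_odd k) (2 * k + 2)).
Proof.
by split=> [k _ | k]; [exact: realizable_scheme_even | exact: realizable_scheme_odd].
Qed.
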